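(* Let a partial coloring of an $n\times n$ square $A$ uniquely extend to $L(n,2n-2)$. Then there are no three distinct rows $i_1,i_2,i_3$ and three distinct columns $j_1,j_2,j_3$ such that either (a) the five entries $(i_1,j_1),(i_1,j_2),(i_2,j_2),(i_2,j_3),(i_3,j_3)$ are all uncolored; or (b) the five entries $(i_1,j_1),(i_2,j_1),(i_2,j_2),(i_3,j_2),(i_3,j_3)$ are all uncolored.
   Context: For positive integers $n,k$, let $\mathcal{L}_{n,k}$ be the set of $n\times n$ squares all of whose entries are colored with colors from a fixed set of $k$ colors $\{1,\dots,k\}$ such that any two entries in the same row, or in the same column, have different colors. Entries are indexed $(i,j)$, $i$ the row and $j$ the column. A partial coloring of an $n\times n$ square assigns colors from $\{1,\dots,k\}$ to some of its entries; the remaining entries are called uncolored. A partial coloring extends to $L(n,k)$ if the uncolored entries can be colored so that the resulting fully colored square lies in $\mathcal{L}_{n,k}$ (keeping the given colors), and it uniquely extends to $L(n,k)$ if there is exactly one such way. *)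

From mathcomp Require Import all_boot.
Set Implicit Arguments. Unset Strict Implicit. Unset Printing Implicit Defensive.

Definition coloring (n k : nat) := {ffun 'I_n * 'I_n -> 'I_k}.

Definition pcoloring (n k : nat) := {ffun 'I_n * 'I_n -> option 'I_k}.

Definition in_L (n k : nat) (L : coloring n k) : Prop :=
  (forall i j j', j != j' -> L (i, j) != L (i, j')) /\
  (forall i i' j, i != i' -> L (i, j) != L (i', j)).

Definition extends_to (n k : nat) (P : pcoloring n k) (L : coloring n k) : Prop :=
  forall i j c, P (i, j) = Some c -> L (i, j) = c.

Definition extends (n k : nat) (P : pcoloring n k) : Prop :=
  exists L, in_L L /\ extends_to P L.

Definition uniquely_extends (n k : nat) (P : pcoloring n k) : Prop :=
  exists! L : coloring n k, in_L L /\ extends_to P L.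

Definition uncolored (n k : nat) (P : pcoloring n k) (i j : 'I_n) : Prop :=
  P (i, j) = None.

From mathcomp Require Import all_boot zify.
Set Implicit Arguments. Unset Strict Implicit. Unset Printing Implicit Defensive.

(* Let L be the unique extension. If (i, j) is uncolored, every color occurs in
   row i or in column j, since otherwise recoloring (i, j) gives a second
   extension; as row and column carry n colors each out of 2n - 2, they share
   exactly two colors, L(i, j) and a second one b(i, j). If e and f are
   uncolored cells on a common line, then b(e) = L(f) or b(f) = L(e), since
   otherwise swapping the colors of e and f gives a second extension. Along a
   zigzag of five uncolored cells these constraints, together with the colors of
   the four further crossings of its six lines, are contradictory. Pattern (b)
   is the transpose of pattern (a), and reading a zigzag of pattern (a)
   backwards gives the transpose of another one, which halves the case
   analysis. *)

Lemma uniq3E (T : eqType) (x y z : T) :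
  uniq [:: x; y; z] = [&& x != y, x != z & y != z].
Proof. by rewrite /= !inE negb_or andbT andbA. Qed.

Lemma meet_pair_eq (C : finType) (A B : {set C}) (a b x : C) :
  A :&: B = [set a; b] -> x \in A -> x \in B -> x != a -> x = b.
Proof.
move=> AB xA xB; have : x \in A :&: B by rewrite inE xA.
by rewrite AB !inE => /orP[/eqP-> | /eqP->]; rewrite ?eqxx.
Qed.

Lemma meet_pair_memr (C : finType) (A B : {set C}) (a b : C) :
  A :&: B = [set a; b] -> (b \in A) && (b \in B).
Proof. by move=> AB; rewrite -in_setI AB !inE eqxx orbT. Qed.

Lemma meet_pair_meml (C : finType) (A B : {set C}) (a b : C) :
  A :&: B = [set a; b] -> (a \in A) && (a \in B).
Proof. by move=> AB; rewrite -in_setI AB !inE eqxx. Qed.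

Lemma cover_mem (C : finType) (A B : {set C}) x :
  A :|: B = setT -> (x \in A) || (x \in B).
Proof. by move=> AB; rewrite -in_setU AB inE. Qed.

(* A0, ..., A5 are the color sets of the six lines of a zigzag, alternately
   columns and rows; a_t is the color of the cell where A_(t-1) and A_t cross and
   b_t the other color they share; c_st is the color of the cell where A_s and
   A_t cross. *)
Section Zigzag.
Variables (C : finType) (A0 A1 A2 A3 A4 A5 : {set C}).
Variables (a1 a2 a3 a4 a5 b1 b2 b3 b4 b5 c03 c14 c25 c05 : C).

Hypotheses (meet1 : A0 :&: A1 = [set a1; b1]) (meet2 : A1 :&: A2 = [set a2; b2])
  (meet3 : A2 :&: A3 = [set a3; b3]) (meet4 : A3 :&: A4 = [set a4; b4])
  (meet5 : A4 :&: A5 = [set a5; b5]).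
Hypotheses (cover12 : A1 :|: A2 = setT) (cover34 : A3 :|: A4 = setT).
Hypotheses (c03_0 : c03 \in A0) (c03_3 : c03 \in A3) (c14_1 : c14 \in A1)
  (c25_2 : c25 \in A2) (c25_5 : c25 \in A5)
  (c05_0 : c05 \in A0) (c05_5 : c05 \in A5).
Hypotheses (uniq0 : uniq [:: a1; c03; c05]) (uniq1 : uniq [:: a1; a2; c14])
  (uniq2 : uniq [:: a2; a3; c25]) (uniq3 : uniq [:: c03; a3; a4])
  (uniq4 : uniq [:: c14; a4; a5]) (uniq5 : uniq [:: c05; c25; a5]).
Hypotheses (swap12 : b1 = a2 \/ b2 = a1) (swap23 : b2 = a3 \/ b3 = a2)
  (swap34 : b3 = a4 \/ b4 = a3) (swap45 : b4 = a5 \/ b5 = a4).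

Lemma zigzag_contra : c14 \in A2 -> False.
Proof.
move: uniq0 uniq1 uniq2 uniq3 uniq4 uniq5; rewrite !uniq3E.
move=> /and3P[a1c03 a1c05 c03c05] /and3P[_ a1c14 a2c14] /and3P[_ a2c25 a3c25].
move=> /and3P[c03a3 c03a4 a3a4] /and3P[_ c14a5 _] /and3P[c05c25 c05a5 c25a5] c14_2.
have c14E : c14 = b2 by apply: (meet_pair_eq meet2); rewrite // eq_sym.
have b1E : b1 = a2.
  by case: swap12 => // b2E; move: a1c14; rewrite c14E b2E eqxx.
have /andP[_ a2_2] := meet_pair_meml meet2.
have c03_2 : c03 \in A2.
  case/orP: (cover_mem c03 cover12) => // c03_1.
  by rewrite (meet_pair_eq meet1 c03_0 c03_1) 1?eq_sym // b1E.
have c03E : c03 = b3 by exact: (meet_pair_eq meet3).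
have b4E : b4 = a3.
  by case: swap34 => // b3E; move: c03a4; rewrite c03E b3E eqxx.
have a3_4 : a3 \in A4 by rewrite -b4E; case/andP: (meet_pair_memr meet4).
have only_c03 x : x \in A0 -> x \in A3 -> x != a1 -> x != a3 -> x = c03.
  move=> x0 x3 xa1 xa3; rewrite c03E.
  case/orP: (cover_mem x cover12) => [x1 | x2]; last exact: (meet_pair_eq meet3).
  have xa2 : x = a2 by rewrite -b1E; exact: (meet_pair_eq meet1).
  by apply: (meet_pair_eq meet3); rewrite // xa2.
have c05_4 : c05 \in A4.
  case/orP: (cover_mem c05 cover34) => // c05_3.
  have [-> // | c05a3] := eqVneq c05 a3.
  by move: c03c05; rewrite (only_c03 c05) ?eqxx // eq_sym.
have c05E : c05 = b5 by apply: (meet_pair_eq meet5); rewrite // eq_sym.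
have c25E : c25 = b3.
  case/orP: (cover_mem c25 cover34) => [c25_3 | c25_4].
    by apply: (meet_pair_eq meet3); rewrite // eq_sym.
  by move: c05c25; rewrite c05E (meet_pair_eq meet5 c25_4 c25_5) ?eqxx // eq_sym.
have b2E : b2 = a3.
  by case: swap23 => // b3E; move: a2c25; rewrite c25E b3E eqxx.
have b5E : b5 = a4.
  by case: swap45 => // b4a5; move: c14a5; rewrite c14E b2E -b4E b4a5 eqxx.
have /andP[a4_3 _] := meet_pair_meml meet4.
have a4a1 : a4 != a1 by rewrite -b5E -c05E eq_sym.
have a4_0 : a4 \in A0 by rewrite -b5E -c05E.
by move: c03a4; rewrite (only_c03 a4) ?eqxx // eq_sym.
Qed.

End Zigzag.

Section Colorings.
Variables n k : nat.
Implicit Types (L M : coloring n k) (P : pcoloring n k) (x y e f z : 'I_n * 'I_n).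

Definition same_line x y := (x.1 == y.1) || (x.2 == y.2).

Definition row_colors L (i : 'I_n) : {set 'I_k} := [set L (i, j) | j : 'I_n].
Definition col_colors L (j : 'I_n) : {set 'I_k} := [set L (i, j) | i : 'I_n].

Definition unique_extension P L := unique (fun M => in_L M /\ extends_to P M) L.

Lemma same_lineC x y : same_line x y = same_line y x.
Proof. by rewrite /same_line eq_sym [x.2 == _]eq_sym. Qed.

Lemma in_LP L :
  in_L L <-> forall x y, x != y -> same_line x y -> L x != L y.
Proof.
split=> [[Lrow Lcol] [i j] [i' j'] xy | Lline].
  rewrite /same_line /= => /orP[/eqP ii' | /eqP jj'].
    by rewrite -ii'; apply: Lrow; apply: contraNneq xy => <-; rewrite ii'.
  by rewrite -jj'; apply: Lcol; apply: contraNneq xy => <-; rewrite jj'.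
by split=> [i j j' | i i' j] ne; apply: Lline;
  rewrite /same_line ?xpair_eqE ?eqxx ?(negbTE ne) ?andbF ?orbT.
Qed.

Lemma mem_row_colors L i j : L (i, j) \in row_colors L i.
Proof. exact: imset_f. Qed.

Lemma mem_col_colors L i j : L (i, j) \in col_colors L j.
Proof. exact: (imset_f (fun i => L (i, j))). Qed.

Lemma row_inj L i : in_L L -> injective (fun j => L (i, j)).
Proof.
by case=> Lrow _ j j' Ljj'; case: (eqVneq j j') => // /(Lrow i); rewrite Ljj' eqxx.
Qed.

Lemma col_inj L j : in_L L -> injective (fun i => L (i, j)).
Proof.
by case=> _ Lcol i i' Lii'; case: (eqVneq i i') => // /(Lcol _ _ j); rewrite Lii' eqxx.
Qed.

Lemma card_row_colors L i : in_L L -> #|row_colors L i| = n.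
Proof. by move=> HL; rewrite card_imset ?card_ord //; apply: row_inj. Qed.

Lemma card_col_colors L j : in_L L -> #|col_colors L j| = n.
Proof. by move=> HL; rewrite card_imset ?card_ord //; apply: col_inj. Qed.

Lemma uniq_row L i j1 j2 j3 : in_L L -> uniq [:: j1; j2; j3] ->
  uniq [:: L (i, j1); L (i, j2); L (i, j3)].
Proof. by move=> HL; rewrite -(map_inj_uniq (row_inj (i := i) HL)). Qed.

Lemma uniq_col L j i1 i2 i3 : in_L L -> uniq [:: i1; i2; i3] ->
  uniq [:: L (i1, j); L (i2, j); L (i3, j)].
Proof. by move=> HL; rewrite -(map_inj_uniq (col_inj (j := j) HL)). Qed.

Lemma in_L_local L M (S : {set 'I_n * 'I_n}) :
  in_L L -> (forall x, x \notin S -> M x = L x) ->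
  (forall x y, x \in S -> x != y -> same_line x y -> M x != M y) -> in_L M.
Proof.
move=> /in_LP HL ML MS; apply/in_LP => x y xy lxy.
have [xS | xS] := boolP (x \in S); first exact: MS.
have [yS | yS] := boolP (y \in S).
  by rewrite eq_sym MS // 1?eq_sym // same_lineC.
by rewrite !ML //; apply: HL.
Qed.

Lemma unique_extension_local P L M (S : {set 'I_n * 'I_n}) :
  unique_extension P L -> (forall x, x \in S -> P x = None) ->
  (forall x, x \notin S -> M x = L x) ->
  (forall x y, x \in S -> x != y -> same_line x y -> M x != M y) -> M = L.
Proof.
move=> [[HL HP] uniqL] PS ML MS; symmetry; apply: uniqL; split.
  exact: in_L_local HL ML MS.
move=> i j c Pij; have [ijS | ijS] := boolP ((i, j) \in S).
  by rewrite PS in Pij.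
by rewrite ML //; apply: HP.
Qed.

Lemma row_col_cover P L i j : unique_extension P L -> P (i, j) = None ->
  row_colors L i :|: col_colors L j = setT.
Proof.
move=> UL Pij; apply/setP => c; rewrite !inE.
apply/negPn/negP; rewrite negb_or => /andP[c_row c_col].
pose M : coloring n k := [ffun x => if x == (i, j) then c else L x].
have ML : M = L.
  apply: (unique_extension_local (S := [set (i, j)]) UL) => [x | x | x [i' j']].
  - by rewrite inE => /eqP->.
  - by rewrite inE ffunE => /negbTE->.
  rewrite inE !ffunE => /eqP-> ij_y; rewrite eqxx [_ == (i, j)]eq_sym (negbTE ij_y).
  rewrite /same_line /= => /orP[/eqP<- | /eqP<-].
    by apply: contraNneq c_row => ->; apply: mem_row_colors.
  by apply: contraNneq c_col => ->; apply: mem_col_colors.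
have Mij : M (i, j) = c by rewrite ffunE eqxx.
by move: c_row; rewrite -Mij ML mem_row_colors.
Qed.

Lemma card_row_col_meet L i j : in_L L ->
  row_colors L i :|: col_colors L j = setT ->
  #|row_colors L i :&: col_colors L j| + k = n + n.
Proof.
move=> HL cover.
have := cardsUI (row_colors L i) (col_colors L j).
by rewrite cover cardsT card_ord card_row_colors // card_col_colors // addnC.
Qed.

Lemma cross_color_unique L e f z b : in_L L ->
  row_colors L e.1 :&: col_colors L e.2 = [set L e; b] -> L f \notin [set L e; b] ->
  same_line e f -> same_line e z -> z != f -> L z != L f.
Proof.
move=> HL meet_e; rewrite -meet_e inE.
case: e {meet_e} => i j; case: f => i2 j2; case: z => i1 j1 /= Lf ef ez zf.
apply: contra Lf => /eqP Lzf; move: ef ez zf Lzf; rewrite /same_line /=.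
case/orP=> /eqP<-; case/orP=> /eqP<- zf Lzf.
- by move: (row_inj HL Lzf) zf => ->; rewrite eqxx.
- by rewrite mem_row_colors -Lzf mem_col_colors.
- by rewrite -{1}Lzf mem_row_colors mem_col_colors.
- by move: (col_inj HL Lzf) zf => ->; rewrite eqxx.
Qed.

Lemma swap_choice P L e f be bf : unique_extension P L ->
  P e = None -> P f = None -> e != f -> same_line e f ->
  row_colors L e.1 :&: col_colors L e.2 = [set L e; be] ->
  row_colors L f.1 :&: col_colors L f.2 = [set L f; bf] ->
  be = L f \/ bf = L e.
Proof.
move=> UL Pe Pf ef lef meet_e meet_f; have HL := UL.1.1.
have Lef : L e != L f by apply: (in_LP L).1.
have [-> | nbe] := eqVneq be (L f); first by left.
have [-> | nbf] := eqVneq bf (L e); first by right.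
have fresh_f z : same_line e z -> z != f -> L z != L f.
  by apply: cross_color_unique HL meet_e _ lef; rewrite !inE negb_or eq_sym Lef eq_sym.
have fresh_e z : same_line f z -> z != e -> L z != L e.
  apply: cross_color_unique HL meet_f _ _; last by rewrite same_lineC.
  by rewrite !inE negb_or Lef eq_sym.
pose M : coloring n k := [ffun x => if x == e then L f else if x == f then L e else L x].
have ML : M = L.
  apply: (unique_extension_local (S := [set e; f]) UL) => [x | x | x y].
  - by rewrite !inE => /orP[] /eqP->.
  - by rewrite !inE negb_or ffunE => /andP[/negbTE-> /negbTE->].
  rewrite !inE !ffunE => /orP[] /eqP-> xy lxy.
    rewrite eqxx [y == e]eq_sym (negbTE xy).
    by case: (eqVneq y f) => [_ | yf]; rewrite eq_sym // fresh_f.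
  rewrite [f == e]eq_sym (negbTE ef) eqxx [y == f]eq_sym (negbTE xy).
  by case: (eqVneq y e) => [_ | ye]; rewrite // eq_sym fresh_e.
have := congr1 (fun M => M e) ML; rewrite /= ffunE eqxx => /eqP.
by rewrite eq_sym (negbTE Lef).
Qed.

Definition transpose T (F : {ffun 'I_n * 'I_n -> T}) : {ffun 'I_n * 'I_n -> T} :=
  [ffun x => F (x.2, x.1)].

Lemma transposeK T : involutive (@transpose T).
Proof. by move=> F; apply/ffunP => -[i j]; rewrite !ffunE. Qed.

Lemma col_colors_transpose L j : col_colors (transpose L) j = row_colors L j.
Proof. by apply/setP => c; apply/imsetP/imsetP => -[i _ ->]; exists i; rewrite ?ffunE. Qed.

Lemma in_L_transpose L : in_L L -> in_L (transpose L).
Proof. by case=> Lrow Lcol; split=> *; rewrite !ffunE /=; [apply: Lcol | apply: Lrow]. Qed.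

Lemma extends_to_transpose P L :
  extends_to P L -> extends_to (transpose P) (transpose L).
Proof. by move=> HP i j c; rewrite !ffunE; apply: HP. Qed.

Lemma unique_extension_transpose P L :
  unique_extension P L -> unique_extension (transpose P) (transpose L).
Proof.
move=> [[HL HP] uniqL]; split.
  by split; [apply: in_L_transpose | apply: extends_to_transpose].
move=> M [HM PM]; rewrite -[M]transposeK; congr transpose; apply: uniqL.
split; first exact: in_L_transpose.
by rewrite -[P]transposeK; apply: extends_to_transpose.
Qed.

End Colorings.

Lemma row_col_meet_pair n (L : coloring n (2 * n - 2)) i j : in_L L ->
  row_colors L i :|: col_colors L j = setT ->
  exists b, row_colors L i :&: col_colors L j = [set L (i, j); b].
Proof.
move=> HL cover; have n_gt0 : 0 < n by apply: leq_ltn_trans (ltn_ord i).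
have /cards2P[x [y [_ meet]]] : #|row_colors L i :&: col_colors L j| == 2.
  by have := card_row_col_meet HL cover; lia.
have : L (i, j) \in [set x; y] by rewrite -meet inE mem_row_colors mem_col_colors.
rewrite !inE => /orP[/eqP-> | /eqP->]; first by exists y.
by exists x; rewrite meet setUC.
Qed.

Section ZigzagPattern.
Variables (n : nat) (P : pcoloring n (2 * n - 2)) (L : coloring n (2 * n - 2)).
Variables (i1 i2 i3 j1 j2 j3 : 'I_n).
Hypothesis UL : unique_extension P L.
Hypotheses (ui : uniq [:: i1; i2; i3]) (uj : uniq [:: j1; j2; j3]).
Hypotheses (u11 : P (i1, j1) = None) (u12 : P (i1, j2) = None)
  (u22 : P (i2, j2) = None) (u23 : P (i2, j3) = None) (u33 : P (i3, j3) = None).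

Lemma zigzag_through_col : L (i1, j3) \in col_colors L j2 -> False.
Proof.
have HL := UL.1.1.
have [b1 meet1] := row_col_meet_pair HL (row_col_cover UL u11).
have [b2 meet2] := row_col_meet_pair HL (row_col_cover UL u12).
have [b3 meet3] := row_col_meet_pair HL (row_col_cover UL u22).
have [b4 meet4] := row_col_meet_pair HL (row_col_cover UL u23).
have [b5 meet5] := row_col_meet_pair HL (row_col_cover UL u33).
move: (ui) (uj); rewrite !uniq3E => /and3P[i12 _ i23] /and3P[j12 _ j23].
have cell_neq i i' j j' : (i != i') || (j != j') -> (i, j) != (i', j').
  by rewrite xpair_eqE negb_and.
apply: (zigzag_contra (A0 := col_colors L j1) (A1 := row_colors L i1)
  (A2 := col_colors L j2) (A3 := row_colors L i2) (A4 := col_colors L j3)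
  (A5 := row_colors L i3) (c03 := L (i2, j1)) (c25 := L (i3, j2)) (c05 := L (i3, j1))).
all: rewrite ?(setIC (col_colors _ _)) ?meet1 ?meet2 ?meet3 ?meet4 ?meet5.
all: rewrite ?mem_row_colors ?mem_col_colors ?uniq_row ?uniq_col //.
all: try exact: (row_col_cover UL).
- by apply: (swap_choice UL) => //; rewrite ?cell_neq ?j12 ?orbT //= /same_line eqxx.
- by apply: (swap_choice UL) => //; rewrite ?cell_neq ?i12 //= /same_line eqxx orbT.
- by apply: (swap_choice UL) => //; rewrite ?cell_neq ?j23 ?orbT //= /same_line eqxx.
- by apply: (swap_choice UL) => //; rewrite ?cell_neq ?i23 //= /same_line eqxx orbT.
Qed.

End ZigzagPattern.

Lemma zigzag_free n (P : pcoloring n (2 * n - 2)) L (i1 i2 i3 j1 j2 j3 : 'I_n) :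
  unique_extension P L -> uniq [:: i1; i2; i3] -> uniq [:: j1; j2; j3] ->
  P (i1, j1) = None -> P (i1, j2) = None -> P (i2, j2) = None ->
  P (i2, j3) = None -> P (i3, j3) = None -> False.
Proof.
move=> UL ui uj u11 u12 u22 u23 u33.
case/orP: (cover_mem (L (i1, j3)) (row_col_cover UL u22)) => [row_i2 | col_j2].
  apply: (zigzag_through_col (unique_extension_transpose UL)
    (i1 := j3) (i2 := j2) (i3 := j1) (j1 := i3) (j2 := i2) (j3 := i1));
    rewrite ?ffunE ?col_colors_transpose //.
  1,2: by rewrite -rev_uniq.
exact: (zigzag_through_col UL ui uj u11 u12 u22 u23 u33 col_j2).
Qed.

Theorem lemma4 (n : nat) (P : pcoloring n (2 * n - 2)) :
  uniquely_extends P ->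
  ~ (exists (i1 i2 i3 j1 j2 j3 : 'I_n),
       [/\ i1 != i2, i1 != i3 & i2 != i3] /\
       [/\ j1 != j2, j1 != j3 & j2 != j3] /\
       ((uncolored P i1 j1 /\ uncolored P i1 j2 /\ uncolored P i2 j2 /\
         uncolored P i2 j3 /\ uncolored P i3 j3) \/
        (uncolored P i1 j1 /\ uncolored P i2 j1 /\ uncolored P i2 j2 /\
         uncolored P i3 j2 /\ uncolored P i3 j3))).
Proof.
case=> L UL [i1 [i2 [i3 [j1 [j2 [j3 [[i12 i13 i23] [[j12 j13 j23] zigzag]]]]]]]].
have ui : uniq [:: i1; i2; i3] by rewrite uniq3E i12 i13 i23.
have uj : uniq [:: j1; j2; j3] by rewrite uniq3E j12 j13 j23.
case: zigzag => [[u11 [u12 [u22 [u23 u33]]]] | [u11 [u21 [u22 [u32 u33]]]]].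
  exact: (zigzag_free UL ui uj u11 u12 u22 u23 u33).
by apply: (zigzag_free (unique_extension_transpose UL) uj ui); rewrite ffunE.
Qed.
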